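(* Let $A$ be a finitely generated torsion $\Lambda$-module, $M=A^\circ$ its $\mathbb{Z}_p$-torsion submodule. (i) If $x\in M$ with $p\le p^l=\mathrm{ess.ord}(x)$ and $g\in\Lambda$ satisfies $gx=0$, then $g\equiv 0\bmod p^l$. (ii) There is a distinguished polynomial $G(T)\in\mathbb{Z}_p[T]$ such that $G(T)A\subseteq M$ and $\mathrm{ord}(y)=\mathrm{ess.ord}(y)$ for all $y\in G(T)A$. (iii) If $x\in A\setminus D(A)$ and $p^{\delta(x)}x=c+z$ with $c\in\mathcal{L}(A)$, $z\in M$, then $c\notin p\,\mathcal{L}(A)$.
   Context: $p$ is an odd prime, $\Lambda=\mathbb{Z}_p[[T]]$. For a finitely generated torsion $\Lambda$-module $A$: $A^\circ=M(A)$ is its $\mathbb{Z}_p$-torsion submodule; $\mathcal{L}(A)=\{x\in A:\ p\text{-rank}(\Lambda x)<\infty\}$; $D(A)=\mathcal{L}(A)+M(A)$ (the module of decomposable elements). For $x\in M(A)$, $\mathrm{ord}(x)=\min\{p^k: p^kx=0\}$ and the essential order $\mathrm{ess.ord}(x)$ is the common value of $\mathrm{ord}(T^jx)$ for all sufficiently large $j$. For $x\in A\setminus D(A)$, $\delta(x)=\min\{k>0: p^kx\in D(A)\}$. *)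

From HB Require Import structures.
From mathcomp Require Import all_boot all_order all_algebra.
Set Implicit Arguments. Unset Strict Implicit. Unset Printing Implicit Defensive.
Import GRing.Theory.

Section Iwasawa.
Variable p : nat.

(* p-adic integers as digit expansions a = sum_n (a n) p^n, digits in 'F_p
   (for p prime, 'F_p is exactly {0,..,p-1}). *)
Definition Zp := nat -> 'F_p.

Definition zp_trunc (a : Zp) (n : nat) : nat := \sum_(i < n) (a i : nat) * p ^ i.

(* digit n of x is (x %/ p^n) mod p; it only depends on x mod p^(n+1) *)
Definition zp_nat (m : nat) : Zp := fun n => inZp (m %/ p ^ n).
Definition zp_zero : Zp := zp_nat 0.
Definition zp_one : Zp := zp_nat 1.
Definition zp_add (a b : Zp) : Zp :=
  fun n => inZp ((zp_trunc a n.+1 + zp_trunc b n.+1) %/ p ^ n).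
Definition zp_mul (a b : Zp) : Zp :=
  fun n => inZp ((zp_trunc a n.+1 * zp_trunc b n.+1) %/ p ^ n).
Definition zp_opp (a : Zp) : Zp :=
  fun n => inZp ((p ^ n.+1 - zp_trunc a n.+1) %/ p ^ n).

(* Lambda = Z_p[[T]] : coefficient sequences *)
Definition Lam := nat -> Zp.
Definition lam_const (c : Zp) : Lam := fun i => if i == 0 then c else zp_zero.
Definition lam_zero : Lam := lam_const zp_zero.
Definition lam_one : Lam := lam_const zp_one.
Definition lam_T : Lam := fun i => if i == 1 then zp_one else zp_zero.
Definition lam_add (f g : Lam) : Lam := fun i => zp_add (f i) (g i).
Definition lam_mul (f g : Lam) : Lam :=
  fun i => \big[zp_add/zp_zero]_(j < i.+1) zp_mul (f j) (g (i - j)).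

(* distinguished polynomial: monic polynomial in Z_p[T] whose non-leading
   coefficients are divisible by p *)
Definition distinguished (G : Lam) : Prop :=
  exists n, [/\ G n = zp_one,
               (forall i, n < i -> G i = zp_zero) &
               (forall i, i < n -> (G i 0 : nat) = 0)].

Record is_lam_module (A : zmodType) (act : Lam -> A -> A) : Prop := {
  act_addr : forall f x y, (act f (x + y) = act f x + act f y)%R;
  act_addl : forall f g x, (act (lam_add f g) x = act f x + act g x)%R;
  act_mul  : forall f g x, act (lam_mul f g) x = act f (act g x);
  act_one  : forall x, act lam_one x = x }.

Section Module.
Variables (A : zmodType) (act : Lam -> A -> A).

Definition finitely_generated : Prop :=
  exists n (e : 'I_n -> A), forall x : A,
    exists c : 'I_n -> Lam, (x = \sum_(i < n) act (c i) (e i))%R.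

Definition lam_torsion : Prop :=
  forall x : A, exists2 f : Lam, f <> lam_zero & (act f x = 0)%R.

Definition inM (x : A) : Prop := exists k, (x *+ (p ^ k) = 0)%R.

Definition is_ord (x : A) (k : nat) : Prop :=
  (x *+ (p ^ k) = 0)%R /\ forall k', k' < k -> (x *+ (p ^ k') <> 0)%R.

Definition is_essord (x : A) (l : nat) : Prop :=
  exists J, forall j, J <= j -> is_ord (iter j (act lam_T) x) l.

(* L(A): p-rank of Lambda x finite, i.e. (Lambda x)/p(Lambda x) finite *)
Definition inL (x : A) : Prop :=
  exists n (s : nat -> Lam), forall f : Lam,
    exists2 i, i < n & exists g : Lam, (act f x = act (s i) x + (act g x) *+ p)%R.

Definition inD (x : A) : Prop :=
  exists c z, [/\ inL c, inM z & (x = c + z)%R].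

Definition is_delta (x : A) (k : nat) : Prop :=
  [/\ 0 < k, inD (x *+ (p ^ k))%R &
      forall k', 0 < k' < k -> ~ inD (x *+ (p ^ k'))%R].

End Module.
End Iwasawa.

(* The only structural input is a weak Weierstrass preparation: if [T^c = v f + p r]
   (which holds for every [f] prime to [p]), successive p-adic approximation yields
   a distinguished [P] with [q f = P].
   (i) Write [g = p^a h] with [h] prime to [p]. If [a < l], then [T^c] lies in
   [Lam h + p Lam], hence [p^(l-1) T^(J+c) x] lies in [Lam g x + p^l T^J Lam x = 0],
   contradicting [ess.ord x = p^l].
   (ii) Distinguished multiples of annihilators of the generators multiply to [G1]
   with [G1 A] inside [M]. By induction on the exponent of [p] killing a generator
   there is a uniform [s] such that [T^s] kills every element of [G1 A] killed by a
   power of [T]; for [G = T^s G1] no [p^k' G a] is then killed by a power of [T]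
   unless it is [0], so [ord = ess.ord] on [G A].
   (iii) If [c = p c'] with [c'] in [L(A)], then [p^(k-1) x = c' + (p^(k-1) x - c')]
   and [p (p^(k-1) x - c') = z] is in [M], so [p^(k-1) x] is decomposable, against
   the minimality of [k = delta x] (or [x] not in [D(A)] when [k = 1]). *)

From Pilot Require Import Defs.
From HB Require Import structures.
From mathcomp Require Import all_boot all_order all_algebra zify ring.
From mathcomp Require Import boolp.
Set Implicit Arguments. Unset Strict Implicit. Unset Printing Implicit Defensive.
Import GRing.Theory.

Section PadicDigits.
Variable p : nat.
Hypothesis p_prime : prime p.

Local Notation Zp := (Defs.Zp p).
Local Notation trunc := (@zp_trunc p).

Lemma expp_gt0 n : 0 < p ^ n. Proof. by rewrite expn_gt0 prime_gt0. Qed.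

Lemma digit_ltp (a : Zp) i : (a i : nat) < p.
Proof. by have := ltn_ord (a i); rewrite [X in _ < X -> _]Fp_cast. Qed.

Lemma trunc0 (a : Zp) : trunc a 0 = 0.
Proof. by rewrite /zp_trunc big_ord0. Qed.

Lemma truncS (a : Zp) n : trunc a n.+1 = trunc a n + (a n : nat) * p ^ n.
Proof. by rewrite /zp_trunc big_ord_recr. Qed.

Lemma trunc_ltp (a : Zp) n : trunc a n < p ^ n.
Proof.
elim: n => [|n IH]; first by rewrite trunc0.
have := digit_ltp a n; rewrite truncS expnS; nia.
Qed.

Lemma trunc_mod (a : Zp) n m : n <= m -> trunc a m %% p ^ n = trunc a n.
Proof.
move=> /subnK <-; elim: (m - n) => [|k IH].
  by rewrite add0n modn_small // trunc_ltp.
rewrite addSn truncS -modnDml IH -modnDmr expnD mulnA modnMl addn0.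
by rewrite modn_small // trunc_ltp.
Qed.

Lemma digit_trunc (a : Zp) n : (a n : nat) = trunc a n.+1 %/ p ^ n.
Proof.
by rewrite truncS divnDr ?dvdn_mull // mulnK ?expp_gt0 // divn_small ?trunc_ltp.
Qed.

Lemma zp_trunc_inj (a b : Zp) : (forall n, trunc a n = trunc b n) -> a = b.
Proof.
by move=> eq_ab; apply: funext => n; apply: val_inj; rewrite /= !digit_trunc eq_ab.
Qed.

Definition coherent (F : nat -> nat) :=
  forall n m, n <= m -> F m %% p ^ n = F n %% p ^ n.

Definition zp_of (F : nat -> nat) : Zp := fun n => inZp (F n.+1 %/ p ^ n).

Lemma trunc_zp_of F : coherent F -> forall n, trunc (zp_of F) n = F n %% p ^ n.
Proof.
move=> cohF; elim=> [|n IH]; first by rewrite trunc0 expn0 modn1.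
rewrite truncS IH /= Fp_cast // -(cohF n n.+1) // modn_divl -expnS.
by rewrite -(@modn_dvdm (p ^ n.+1)) ?dvdn_exp2l // addnC -divn_eq.
Qed.

Lemma trunc_zp_add (a b : Zp) n :
  trunc (zp_add a b) n = (trunc a n + trunc b n) %% p ^ n.
Proof.
apply: (trunc_zp_of (F := fun n => trunc a n + trunc b n)).
by move=> k m km; rewrite -modnDm !trunc_mod // modnDm.
Qed.

Lemma trunc_zp_mul (a b : Zp) n :
  trunc (zp_mul a b) n = (trunc a n * trunc b n) %% p ^ n.
Proof.
apply: (trunc_zp_of (F := fun n => trunc a n * trunc b n)).
by move=> k m km; rewrite -modnMm !trunc_mod // modnMm.
Qed.

Lemma trunc_zp_nat m n : trunc (zp_nat p m) n = m %% p ^ n.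
Proof. exact: (trunc_zp_of (F := fun _ => m)). Qed.

Lemma trunc_zp_opp (a : Zp) n :
  trunc (zp_opp a) n = (p ^ n - trunc a n) %% p ^ n.
Proof.
apply: (trunc_zp_of (F := fun n => p ^ n - trunc a n)).
have le_trunc k : trunc a k <= p ^ k by apply/ltnW/trunc_ltp.
move=> k m km; apply/eqP.
rewrite -(eqn_modDr (trunc a m)) subnK // -modnDmr trunc_mod // subnK //.
by rewrite -(subnK km) expnD modnMl modnn.
Qed.

End PadicDigits.

Section Iwasawa.
Variable p : nat.
Hypothesis p_prime : prime p.

Local Notation Zp := (Defs.Zp p).
Local Notation trunc := (@zp_trunc p).
Local Notation Lam := (Lam p).

Lemma zp_addA : associative (@zp_add p).
Proof.
move=> a b c; apply: zp_trunc_inj => // n.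
by rewrite !trunc_zp_add // modnDml modnDmr addnA.
Qed.

Lemma zp_addC : commutative (@zp_add p).
Proof. by move=> a b; apply: zp_trunc_inj => // n; rewrite !trunc_zp_add // addnC. Qed.

Lemma zp_add0 : left_id (zp_zero p) (@zp_add p).
Proof.
move=> a; apply: zp_trunc_inj => // n.
by rewrite trunc_zp_add // trunc_zp_nat // mod0n modn_small // trunc_ltp.
Qed.

Lemma zp_addN : left_inverse (zp_zero p) (@zp_opp p) (@zp_add p).
Proof.
move=> a; apply: zp_trunc_inj => // n.
rewrite trunc_zp_add // trunc_zp_opp // trunc_zp_nat // mod0n modnDml subnK ?modnn //.
exact/ltnW/trunc_ltp.
Qed.

HB.instance Definition _ := gen_eqMixin Zp.
HB.instance Definition _ := gen_choiceMixin Zp.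
HB.instance Definition _ := GRing.isZmodule.Build Zp zp_addA zp_addC zp_add0 zp_addN.

Lemma zp_mulA : associative (@zp_mul p).
Proof.
move=> a b c; apply: zp_trunc_inj => // n.
by rewrite !trunc_zp_mul // modnMmr (modnMml (trunc a n * trunc b n)) mulnA.
Qed.

Lemma zp_mulC : commutative (@zp_mul p).
Proof. by move=> a b; apply: zp_trunc_inj => // n; rewrite !trunc_zp_mul // mulnC. Qed.

Lemma zp_mul1 : left_id (zp_one p) (@zp_mul p).
Proof.
move=> a; apply: zp_trunc_inj => // n.
by rewrite trunc_zp_mul // trunc_zp_nat // modnMml mul1n modn_small // trunc_ltp.
Qed.

Lemma zp_mulDl : left_distributive (@zp_mul p) (@zp_add p).
Proof.
move=> a b c; apply: zp_trunc_inj => // n.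
rewrite !(trunc_zp_mul, trunc_zp_add) //.
by rewrite (modnMml (trunc a n + trunc b n)) mulnDl -modnDm.
Qed.

Lemma zp_one_neq0 : zp_one p != zp_zero p.
Proof.
apply/eqP => /(congr1 (trunc^~ 1)).
by rewrite !trunc_zp_nat // expn1 mod0n modn_small // prime_gt1.
Qed.

HB.instance Definition _ :=
  GRing.Zmodule_isComNzRing.Build Zp zp_mulA zp_mulC zp_mul1 zp_mulDl zp_one_neq0.

Lemma truncD (a b : Zp) n : trunc (a + b)%R n = (trunc a n + trunc b n) %% p ^ n.
Proof. exact: trunc_zp_add. Qed.

Lemma truncM (a b : Zp) n : trunc (a * b)%R n = (trunc a n * trunc b n) %% p ^ n.
Proof. exact: trunc_zp_mul. Qed.

Lemma truncN (a : Zp) n : trunc (- a)%R n = (p ^ n - trunc a n) %% p ^ n.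
Proof. exact: trunc_zp_opp. Qed.

Lemma zp_natE m : zp_nat p m = m%:R%R.
Proof.
apply: zp_trunc_inj => // n; rewrite trunc_zp_nat //.
elim: m => [|m IH]; first by rewrite mod0n /= trunc_zp_nat // mod0n.
by rewrite mulrS truncD -IH /= trunc_zp_nat // modnDm add1n.
Qed.

Lemma trunc_natr m n : trunc m%:R%R n = m %% p ^ n.
Proof. by rewrite -zp_natE trunc_zp_nat. Qed.

Lemma trunc_zp0 n : trunc 0%R n = 0.
Proof. by rewrite -(mulr0n 1) trunc_natr mod0n. Qed.

Local Open Scope ring_scope.

Definition lam_opp (f : Lam) : Lam := fun i => - f i.

Lemma lam_zeroE i : lam_zero p i = 0.
Proof. by rewrite /lam_zero /lam_const; case: (i == 0)%N. Qed.

Lemma lam_oneE i : lam_one p i = (i == 0)%N%:R.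
Proof. by rewrite /lam_one /lam_const; case: (i == 0)%N. Qed.

Lemma lam_addA : associative (@lam_add p).
Proof. by move=> f g h; apply: funext => i; apply: addrA. Qed.

Lemma lam_addC : commutative (@lam_add p).
Proof. by move=> f g; apply: funext => i; apply: addrC. Qed.

Lemma lam_add0 : left_id (lam_zero p) (@lam_add p).
Proof. by move=> f; apply: funext => i; rewrite /lam_add lam_zeroE; apply: add0r. Qed.

Lemma lam_addN : left_inverse (lam_zero p) lam_opp (@lam_add p).
Proof. by move=> f; apply: funext => i; rewrite /lam_add lam_zeroE; apply: addNr. Qed.

HB.instance Definition _ := gen_eqMixin Lam.
HB.instance Definition _ := gen_choiceMixin Lam.
HB.instance Definition _ := GRing.isZmodule.Build Lam lam_addA lam_addC lam_add0 lam_addN.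

Lemma lam_mulE (f g : Lam) i : lam_mul f g i = \sum_(j < i.+1) f j * g (i - j)%N.
Proof. by []. Qed.

Definition lam_poly n (f : Lam) : {poly Zp} := \poly_(i < n) f i.

Lemma coef_lam_mul n (f g : Lam) i :
  (i < n)%N -> lam_mul f g i = (lam_poly n f * lam_poly n g)`_i.
Proof.
move=> lt_in; rewrite coefM; apply: eq_bigr => j _.
rewrite !coef_poly (leq_ltn_trans (leq_ord j)) //.
by rewrite (leq_ltn_trans (leq_subr _ _)).
Qed.

Lemma lam_mulA : associative (@lam_mul p).
Proof.
move=> f g h; apply: funext => i; set P := lam_poly i.+1.
have -> : lam_mul f (lam_mul g h) i = (P f * (P g * P h))`_i.
  rewrite lam_mulE coefM; apply: eq_bigr => j _.
  by rewrite (coef_lam_mul (n := i.+1)) ?ltnS ?leq_subr // coef_poly ltn_ord.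
have -> : lam_mul (lam_mul f g) h i = ((P f * P g) * P h)`_i.
  rewrite lam_mulE coefM; apply: eq_bigr => j _.
  by rewrite (coef_lam_mul (n := i.+1)) // coef_poly ltnS leq_subr.
by rewrite mulrA.
Qed.

Lemma lam_mulC : commutative (@lam_mul p).
Proof. by move=> f g; apply: funext => i; rewrite !(coef_lam_mul (n := i.+1)) // mulrC. Qed.

Lemma lam_mul1 : left_id (lam_one p) (@lam_mul p).
Proof.
move=> f; apply: funext => i; rewrite lam_mulE big_ord_recl lam_oneE mul1r subn0.
by rewrite big1 ?addr0 // => j _; rewrite lam_oneE mul0r.
Qed.

Lemma lam_mulDl : left_distributive (@lam_mul p) (@lam_add p).
Proof.
move=> f g h; apply: funext => i.
change (lam_mul (lam_add f g) h i = lam_mul f h i + lam_mul g h i).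
by rewrite !lam_mulE -big_split; apply: eq_bigr => j _; rewrite mulrDl.
Qed.

Lemma lam_one_neq0 : lam_one p != lam_zero p.
Proof.
by apply/eqP => /(congr1 (fun f : Lam => f 0%N)); rewrite lam_oneE lam_zeroE; apply/eqP/oner_neq0.
Qed.

HB.instance Definition _ :=
  GRing.Zmodule_isComNzRing.Build Lam lam_mulA lam_mulC lam_mul1 lam_mulDl lam_one_neq0.

Lemma lam_coefD (f g : Lam) i : (f + g) i = f i + g i. Proof. by []. Qed.
Lemma lam_coefB (f g : Lam) i : (f - g) i = f i - g i. Proof. by []. Qed.
Lemma lam_coef0 i : (0 : Lam) i = 0. Proof. exact: lam_zeroE. Qed.
Lemma lam_coef1 i : (1 : Lam) i = (i == 0)%N%:R. Proof. exact: lam_oneE. Qed.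
Lemma lam_coefM (f g : Lam) i : (f * g) i = \sum_(j < i.+1) f j * g (i - j)%N.
Proof. exact: lam_mulE. Qed.

Lemma lam_coef_natr m i : (m%:R : Lam) i = if i == 0%N then m%:R else 0.
Proof.
elim: m => [|m IH]; first by rewrite !mulr0n lam_coef0; case: ifP.
by rewrite mulrS lam_coefD IH lam_coef1; case: (i == 0)%N; rewrite ?addr0 -?mulrS.
Qed.

Lemma lam_const_natr m : lam_const (m%:R : Zp) = m%:R.
Proof. by apply: funext => i; rewrite lam_coef_natr. Qed.

Lemma lam_coef_natrM m (f : Lam) i : (m%:R * f) i = m%:R * f i.
Proof.
rewrite -lam_const_natr lam_coefM big_ord_recl subn0 big1 ?addr0 // => j _.
by rewrite /lam_const mul0r.
Qed.

Local Notation lamT := (lam_T p).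

Lemma lam_coef_TM (f : Lam) i : (lamT * f) i = if i is k.+1 then f k else 0.
Proof.
rewrite lam_coefM; case: i => [|k]; first by rewrite big_ord1 mul0r.
rewrite 2!big_ord_recl big1 ?addr0 => [|j _]; last by rewrite /lam_T mul0r.
by rewrite /lam_T /= mul0r mul1r add0r subSS subn0.
Qed.

Lemma lam_coef_TXM j (f : Lam) i :
  (lamT ^+ j * f) i = if (j <= i)%N then f (i - j)%N else 0.
Proof.
elim: j i => [|j IH] i; first by rewrite expr0 mul1r subn0.
by rewrite exprS -mulrA lam_coef_TM; case: i => [|i]; rewrite ?IH ?ltnS ?subSS.
Qed.

Lemma lam_coef_TX j i : (lamT ^+ j) i = (i == j)%:R.
Proof.
rewrite -[lamT ^+ j]mulr1 lam_coef_TXM lam_coef1.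
case: (leqP j i) => [ji|ij]; last by rewrite (ltn_eqF ij).
by rewrite subn_eq0 eqn_leq ji andbT.
Qed.

Local Notation pL := (p%:R : Lam).

Lemma pL_exp k : pL ^+ k = (p ^ k)%:R.
Proof. by rewrite natrX. Qed.

Definition zp_shift k (a : Zp) : Zp := fun n => a (n + k)%N.

Lemma trunc_addn (a : Zp) k d :
  trunc a (k + d) = (trunc a k + p ^ k * trunc (zp_shift k a) d)%N.
Proof.
elim: d => [|d IH]; first by rewrite addn0 trunc0 muln0 addn0.
by rewrite addnS !truncS IH /zp_shift (addnC d k) expnD; ring.
Qed.

Lemma zp_shiftK k (a : Zp) : trunc a k = 0%N -> a = (p ^ k)%:R * zp_shift k a.
Proof.
move=> ak0; apply: zp_trunc_inj => // m; rewrite truncM trunc_natr.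
have [le_mk|lt_km] := leqP m k.
  by rewrite -(trunc_mod p_prime a le_mk) ak0 (eqP (dvdn_exp2l p le_mk)) mod0n.
have [d ->] : exists d, m = (k + d.+1)%N by exists (m - k).-1; lia.
rewrite trunc_addn ak0 add0n (modn_small (m := p ^ k)); last first.
  by rewrite ltn_exp2l ?prime_gt1 // addnS ltnS leq_addr.
by rewrite expnD -muln_modr trunc_mod // leq_addl.
Qed.

Definition res (a : Zp) := trunc a 1.

Lemma res_digit0 (a : Zp) : res a = a 0%N.
Proof. by rewrite digit_trunc // expn0 divn1. Qed.

Lemma res_ltp a : (res a < p)%N.
Proof. by have := trunc_ltp p_prime a 1; rewrite expn1. Qed.

Lemma resD a b : res (a + b) = ((res a + res b) %% p)%N.
Proof. by rewrite /res truncD expn1. Qed.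

Lemma resM a b : res (a * b) = ((res a * res b) %% p)%N.
Proof. by rewrite /res truncM expn1. Qed.

Lemma resN a : res (- a) = ((p - res a) %% p)%N.
Proof. by rewrite /res truncN expn1. Qed.

Lemma resB_eq0 a b : res a = res b -> res (a - b) = 0%N.
Proof.
move=> eq_ab; rewrite resD resN modnDmr eq_ab subnKC ?modnn //.
exact/ltnW/res_ltp.
Qed.

Lemma res_natr m : res m%:R = (m %% p)%N.
Proof. by rewrite /res trunc_natr expn1. Qed.

Lemma res0 : res 0 = 0%N.
Proof. by rewrite /res trunc_zp0. Qed.

Lemma res_sum_eq0 n (F : 'I_n -> Zp) :
  (forall j, res (F j) = 0%N) -> res (\sum_(j < n) F j) = 0%N.
Proof.
by move=> F0; elim/big_ind: _ => [|a b ra rb|j _]; rewrite ?res0 ?resD ?ra ?rb ?F0 ?mod0n.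
Qed.

Definition p_dvd (f : Lam) := exists g, f = pL * g.

Lemma p_dvdP f : p_dvd f <-> forall i, res (f i) = 0%N.
Proof.
split=> [[g ->] i|f0]; first by rewrite lam_coef_natrM resM res_natr modnn mul0n mod0n.
exists (fun i => zp_shift 1 (f i)); apply: funext => i.
by rewrite lam_coef_natrM {1}(zp_shiftK (f0 i)) expn1.
Qed.

Lemma p_dvd_TXM j f : p_dvd (lamT ^+ j * f) -> p_dvd f.
Proof.
move/p_dvdP => dvd_f; apply/p_dvdP => i.
by have := dvd_f (i + j)%N; rewrite lam_coef_TXM leq_addl addnK.
Qed.

Lemma p_adic_factor (g : Lam) l :
  (exists h, g = pL ^+ l * h) \/
  (exists a h, [/\ (a < l)%N, g = pL ^+ a * h & ~ p_dvd h]).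
Proof.
elim: l => [|l [[h ->]|[a [h [lt_al -> ndvd_h]]]]].
- by left; exists g; rewrite mul1r.
- have [[h' ->]|ndvd_h] := EM (p_dvd h); last by right; exists l, h.
  by left; exists h'; rewrite exprSr mulrA.
- by right; exists a, h; split=> //; apply: ltnW.
Qed.

Lemma lam_neq0_factor (f : Lam) : f <> 0 ->
  exists a h, f = pL ^+ a * h /\ ~ p_dvd h.
Proof.
move=> f_neq0.
have [i fi_neq0] : exists i, f i <> 0.
  apply: contrapT => all0; apply/f_neq0/funext => i; rewrite lam_coef0.
  by apply: contrapT => ?; apply: all0; exists i.
have [n fin_neq0] : exists n, trunc (f i) n <> trunc 0 n.
  apply: contrapT => all0; apply/fi_neq0/zp_trunc_inj => // n.
  by apply: contrapT => ?; apply: all0; exists n.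
have [[h fE]|[a [h [_ fE ndvd_h]]]] := p_adic_factor f n; last by exists a, h.
case: fin_neq0; rewrite fE pL_exp lam_coef_natrM truncM trunc_natr.
by rewrite modnn mul0n mod0n trunc_zp0.
Qed.

Definition lam_low c (f : Lam) : Lam := fun i => if (i < c)%N then f i else 0.
Definition lam_high c (f : Lam) : Lam := fun i => f (i + c)%N.

Lemma lam_low_high c f : f = lam_low c f + lamT ^+ c * lam_high c f.
Proof.
apply: funext => i; rewrite lam_coefD lam_coef_TXM /lam_low /lam_high.
by case: (ltnP i c) => [|le_ci]; rewrite ?addr0 ?add0r ?subnK.
Qed.

Lemma modp_inv d : (0 < d < p)%N -> exists u, ((d * u) %% p = 1)%N.
Proof.
move=> /andP[d_gt0 lt_dp].
have cop_pd : coprime p d.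
  by rewrite prime_coprime //; apply/negP => /(dvdn_leq d_gt0); rewrite leqNgt lt_dp.
have [a _ /dvdnP[k]] := Bezoutl d (prime_gt0 p_prime); rewrite (eqP cop_pd) => eq_k.
exists (a * p.-1)%N; apply/eqP.
rewrite -(modn_small (prime_gt1 p_prime)) -(eqn_modDr p.-1).
have -> : (d * (a * p.-1) + p.-1 = (1 + a * d) * p.-1)%N by ring.
by rewrite eq_k mulnAC modnMl add1n prednK ?modnn // prime_gt0.
Qed.

Lemma lam_coefX_low (y : Lam) : y 0%N = 0 ->
  forall k i, (i < k)%N -> (y ^+ k) i = 0.
Proof.
move=> y0; elim=> [|k IH] i // lt_ik; rewrite exprS lam_coefM big1 // => j _.
have [->|j_gt0] := posnP j; first by rewrite y0 mul0r.
by rewrite IH ?mulr0 //; have := ltn_ord j; lia.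
Qed.

Lemma lam_coefM_low (f f' g : Lam) i :
  (forall j, (j <= i)%N -> f j = f' j) -> (f * g) i = (f' * g) i.
Proof.
by move=> eq_ff'; rewrite !lam_coefM; apply: eq_bigr => j _; rewrite eq_ff' // -ltnS.
Qed.

(* [s = \sum_k y^k], whose [i]-th coefficient only involves the terms [k <= i] *)
Lemma lam_unit_1B (y : Lam) : y 0%N = 0 -> exists s, s * (1 - y) = 1.
Proof.
move=> y0; pose S n := \sum_(k < n) y ^+ k.
have S_stable j d : (S (j.+1 + d)%N) j = (S j.+1) j.
  elim: d => [|d IH]; first by rewrite addn0.
  rewrite addnS {1}/S big_ord_recr /= -/(S _) lam_coefD IH.
  by rewrite lam_coefX_low ?addr0 // ltnS leq_addr.
exists (fun i => S i.+1 i); apply: funext => i.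
rewrite (lam_coefM_low (f' := S i.+1)); last first.
  by move=> j le_ji; have := S_stable j (i - j)%N; rewrite addSn subnKC.
by rewrite /S mulrC -opprB mulNr -subrX1 opprB lam_coefB lam_coefX_low ?subr0.
Qed.

Lemma lam_unit_modp (w : Lam) : res (w 0%N) != 0%N ->
  exists v r, v * w = 1 + pL * r.
Proof.
move=> w0_neq0.
have [u0 inv_u0] : exists u, ((res (w 0%N) * u) %% p = 1)%N.
  by apply: modp_inv; rewrite lt0n w0_neq0 res_ltp.
pose u : Lam := u0%:R; pose z := 1 - u * w.
have z0 : res (z 0%N) = 0%N.
  rewrite /z /u lam_coefB lam_coef1 lam_coef_natrM resB_eq0 // resM !res_natr.
  by rewrite modnMml mulnC inv_u0 modn_small // prime_gt1.
pose z0L := lam_const (z 0%N).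
have [t z0LE] : p_dvd z0L.
  by apply/p_dvdP => -[|i]; rewrite /z0L /lam_const ?z0 ?res0.
have [s sK] : exists s, s * (1 - (z - z0L)) = 1.
  by apply: lam_unit_1B; rewrite lam_coefB /z0L /lam_const subrr.
exists (s * u), (- (s * t)).
have uwE : u * w = 1 - (z - z0L) - z0L by rewrite /z; ring.
by rewrite -mulrA uwE mulrBr sK z0LE; ring.
Qed.

Lemma lam_TX_modp (f : Lam) : ~ p_dvd f ->
  exists c v r, lamT ^+ c = v * f + pL * r.
Proof.
move=> ndvd_f.
have ex_c : exists c, res (f c) != 0%N.
  apply: contrapT => all0; apply/ndvd_f/p_dvdP => i.
  by apply/eqP/negP => ?; apply: all0; exists i; apply/negP.
have [c c_neq0 c_min] := ex_minnP ex_c.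
have dvd_low : p_dvd (lam_low c f).
  apply/p_dvdP => i; rewrite /lam_low; case: ifP => [lt_ic|]; last by rewrite res0.
  by apply/eqP; apply: contraTT lt_ic => /c_min; rewrite -leqNgt.
have [v [r vK]] : exists v r, v * lam_high c f = 1 + pL * r.
  by apply: lam_unit_modp; rewrite /lam_high add0n.
have [t lowE] := dvd_low.
have fE : f = pL * t + lamT ^+ c * lam_high c f by rewrite -lowE -lam_low_high.
exists c, v, (- (lamT ^+ c * r) - v * t); apply/esym; rewrite fE.
transitivity (lamT ^+ c * (v * lam_high c f) - lamT ^+ c * (pL * r)); first ring.
by rewrite vK; ring.
Qed.

Definition lam_congr k (f g : Lam) := exists h, f = g + pL ^+ k * h.

Lemma lam_congr_trunc k f g :
  lam_congr k f g -> forall i, trunc (f i) k = trunc (g i) k.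
Proof.
move=> [h ->] i; rewrite lam_coefD pL_exp lam_coef_natrM truncD truncM trunc_natr.
by rewrite modnn mul0n mod0n addn0 modn_small // trunc_ltp.
Qed.

Lemma trunc_lam_congr k f g :
  (forall i, trunc (f i) k = trunc (g i) k) -> lam_congr k f g.
Proof.
move=> eq_fg.
have trunc_fBg i : trunc (f i - g i) k = 0%N.
  by rewrite truncD truncN eq_fg modnDmr subnKC ?modnn //; apply/ltnW/trunc_ltp.
exists (fun i => zp_shift k (f i - g i)); apply: funext => i.
by rewrite lam_coefD pL_exp lam_coef_natrM -(zp_shiftK (trunc_fBg i)) addrC subrK.
Qed.

Lemma lam_congrS k f g : lam_congr k.+1 f g -> lam_congr k f g.
Proof. by move=> [h ->]; exists (pL * h); rewrite exprSr mulrA. Qed.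

Lemma lam_congr_eq f g : (forall k, lam_congr k f g) -> f = g.
Proof.
move=> congr_fg; apply: funext => i; apply: zp_trunc_inj => // k.
exact: lam_congr_trunc (congr_fg k) i.
Qed.

Definition lam_lim (F : nat -> Lam) : Lam := fun i => zp_of p (fun n => trunc (F n i) n).

Lemma lam_lim_congr F : (forall k, lam_congr k (F k.+1) (F k)) ->
  forall k, lam_congr k (lam_lim F) (F k).
Proof.
move=> cauchyF.
have trunc_stable n m i : (n <= m)%N -> trunc (F m i) n = trunc (F n i) n.
  move=> /subnK <-; elim: (m - n)%N => [|d IH]; first by rewrite add0n.
  rewrite addSn -IH -(trunc_mod p_prime (F (d + n).+1 i) (leq_addl d n)).
  by rewrite (lam_congr_trunc (cauchyF (d + n)%N)) trunc_mod // leq_addl.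
move=> k; apply: trunc_lam_congr => i; rewrite trunc_zp_of //.
  by rewrite modn_small // trunc_ltp.
by move=> n m le_nm; rewrite trunc_mod // trunc_stable // modn_small // trunc_ltp.
Qed.

Section WeierstrassPreparation.
Variables (f v r : Lam) (c : nat).
Hypothesis TX_modp : lamT ^+ c = v * f + pL * r.

(* successive approximations [(q_k, P_k, E_k)] with [q_k f - P_k = p^(k+1) E_k] *)
Fixpoint weier_step (k : nat) : Lam * Lam * Lam :=
  if k is k'.+1 then
    let: (q, P, E) := weier_step k' in
    (q - pL ^+ k * (lam_high c E * v), P + pL ^+ k * lam_low c E, lam_high c E * r)
  else (v, lamT ^+ c, - r).

Definition weier_q k := (weier_step k).1.1.
Definition weier_P k := (weier_step k).1.2.
Definition weier_E k := (weier_step k).2.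

Lemma weier_stepE k : weier_q k * f - weier_P k = pL ^+ k.+1 * weier_E k.
Proof.
elim: k => [|k]; first by rewrite /weier_q /weier_P /weier_E /= TX_modp expr1; ring.
rewrite /weier_q /weier_P /weier_E /=; case: (weier_step k) => [[q P] E] /= IH.
have {}IH : q * f - P = pL ^+ k.+1 * (lam_low c E + lamT ^+ c * lam_high c E).
  by rewrite -lam_low_high.
rewrite TX_modp in IH; rewrite [pL ^+ k.+2]exprS; set X := pL ^+ k.+1 in IH *.
transitivity (q * f - P - X * (lam_high c E * v * f + lam_low c E)); first ring.
by rewrite IH; ring.
Qed.

Lemma weier_P_shape k : [/\ weier_P k c = 1,
  forall i, (c < i)%N -> weier_P k i = 0 &
  forall i, (i < c)%N -> res (weier_P k i) = 0%N].
Proof.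
elim: k => [|k [Pc P_gt P_lt]].
  rewrite /weier_P /=; split=> [|i lt_ci|i lt_ic]; rewrite lam_coef_TX.
  - by rewrite eqxx.
  - by rewrite gtn_eqF.
  - by rewrite ltn_eqF // res0.
move: Pc P_gt P_lt; rewrite /weier_P /=; case: (weier_step k) => [[q P] E] /= Pc P_gt P_lt.
rewrite /lam_low; split=> [|i lt_ci|i lt_ic]; rewrite lam_coefD pL_exp lam_coef_natrM.
- by rewrite ltnn mulr0 addr0.
- by rewrite ltnNge ltnW //= mulr0 addr0 P_gt.
- by rewrite resD P_lt // resM res_natr expnS modnMr mul0n !mod0n.
Qed.

Lemma weier_q_congr k : lam_congr k (weier_q k.+1) (weier_q k).
Proof.
apply: lam_congrS; rewrite /weier_q /=; case: (weier_step k) => [[q P] E] /=.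
by exists (- (lam_high c E * v)); rewrite mulrN.
Qed.

Lemma weier_P_congr k : lam_congr k (weier_P k.+1) (weier_P k).
Proof.
apply: lam_congrS; rewrite /weier_P /=; case: (weier_step k) => [[q P] E] /=.
by exists (lam_low c E).
Qed.

Lemma weierstrass_preparation : exists q P, distinguished P /\ q * f = P.
Proof.
have q_lim := lam_lim_congr weier_q_congr; have P_lim := lam_lim_congr weier_P_congr.
exists (lam_lim weier_q), (lam_lim weier_P); split.
  exists c; split=> [|i lt_ci|i lt_ic].
  - apply: zp_trunc_inj => // n; rewrite (lam_congr_trunc (P_lim n)).
    by case: (weier_P_shape n) => ->.
  - apply: zp_trunc_inj => // n; rewrite (lam_congr_trunc (P_lim n)).
    by case: (weier_P_shape n) => _ P_gt _; rewrite P_gt.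
  - rewrite -res_digit0 /res (lam_congr_trunc (P_lim 1%N)).
    by case: (weier_P_shape 1) => _ _ /(_ i lt_ic).
apply/eqP; rewrite -subr_eq0; apply/eqP/lam_congr_eq => k.
have [a ->] := q_lim k; have [b ->] := P_lim k.
exists (a * f - b + pL * weier_E k); rewrite add0r.
transitivity (weier_q k * f - weier_P k + pL ^+ k * (a * f - b)); first ring.
by rewrite weier_stepE exprS; ring.
Qed.

End WeierstrassPreparation.

Lemma distinguishedM (P Q : Lam) :
  distinguished P -> distinguished Q -> distinguished (P * Q).
Proof.
move=> [n [Pn P_gt P_lt]] [m [Qm Q_gt Q_lt]]; exists (n + m)%N; split.
- have lt_n : (n < (n + m).+1)%N by rewrite ltnS leq_addr.
  rewrite lam_coefM (bigD1 (Ordinal lt_n)) //= addKn Pn Qm mul1r.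
  rewrite big1 ?addr0 // => j /eqP neq_jn.
  have [lt_jn|lt_nj|eq_jn] := ltngtP j n.
  + by rewrite Q_gt ?mulr0 //; lia.
  + by rewrite P_gt ?mul0r.
  + by case: neq_jn; apply: val_inj.
- move=> i lt_i; rewrite lam_coefM big1 // => j _.
  have [lt_nj|le_jn] := ltnP n j; first by rewrite P_gt ?mul0r.
  by rewrite Q_gt ?mulr0 //; lia.
- move=> i lt_i; rewrite -res_digit0 lam_coefM; apply: res_sum_eq0 => j.
  have [lt_jn|le_nj] := ltnP j n.
    by rewrite resM [res (P _)]res_digit0 P_lt // mul0n mod0n.
  have le_ji : (j <= i)%N by rewrite -ltnS.
  by rewrite resM [res (Q _)]res_digit0 Q_lt ?muln0 ?mod0n //; lia.
Qed.

Lemma distinguished_TX s : distinguished (lamT ^+ s).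
Proof.
exists s; split=> [|i lt_si|i lt_is]; rewrite lam_coef_TX.
- by rewrite eqxx.
- by rewrite gtn_eqF.
- by rewrite ltn_eqF // -res_digit0 res0.
Qed.

Lemma distinguished1 : distinguished 1.
Proof. by rewrite -(expr0 lamT); apply: distinguished_TX. Qed.

Section LambdaModule.
Variables (A : zmodType) (act : Lam -> A -> A).
Hypothesis act_mod : is_lam_module act.

Lemma actDl f g x : act (f + g) x = act f x + act g x.
Proof. exact: (act_addl act_mod). Qed.

Lemma actDr f x y : act f (x + y) = act f x + act f y.
Proof. exact: (act_addr act_mod). Qed.

Lemma actM f g x : act (f * g) x = act f (act g x).
Proof. exact: (act_mul act_mod). Qed.

Lemma act1 x : act 1 x = x.
Proof. exact: (act_one act_mod). Qed.

Lemma act0l x : act 0 x = 0.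
Proof. by apply: (addrI (act 0 x)); rewrite -actDl !addr0. Qed.

Lemma act0r f : act f 0 = 0.
Proof. by apply: (addrI (act f 0)); rewrite -actDr !addr0. Qed.

Lemma actNl f x : act (- f) x = - act f x.
Proof. by apply/eqP; rewrite -addr_eq0 -actDl addNr act0l. Qed.

Lemma act_mulrn f x n : act f (x *+ n) = act f x *+ n.
Proof. by elim: n => [|n IH]; rewrite ?act0r // !mulrS actDr IH. Qed.

Lemma act_natr n x : act n%:R x = x *+ n.
Proof. by elim: n => [|n IH]; rewrite ?act0l // !mulrS actDl act1 IH. Qed.

Lemma act_pL_exp k x : act (pL ^+ k) x = x *+ (p ^ k).
Proof. by rewrite pL_exp act_natr. Qed.

Lemma actC f g x : act f (act g x) = act g (act f x).
Proof. by rewrite -!actM mulrC. Qed.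

Lemma act_sum f n (F : 'I_n -> A) :
  act f (\sum_(i < n) F i) = \sum_(i < n) act f (F i).
Proof. by elim/big_rec2: _ => [|i y z _ <-]; rewrite ?act0r ?actDr. Qed.

Lemma iter_actT j x : iter j (act lamT) x = act (lamT ^+ j) x.
Proof. by elim: j => [|j IH]; rewrite ?act1 // iterS IH exprS actM. Qed.

Lemma inM_act f x : inM p x -> inM p (act f x).
Proof. by move=> [k pk_x]; exists k; rewrite -act_mulrn pk_x act0r. Qed.

Lemma inM_sum n (F : 'I_n -> A) : (forall i, inM p (F i)) -> inM p (\sum_(i < n) F i).
Proof.
move=> MF; elim/big_rec: _ => [|i y _ [m pm_y]]; first by exists 0%N; rewrite mul0rn.
have [k pk_Fi] := MF i; exists (k + m)%N.
by rewrite mulrnDl expnD mulrnA pk_Fi mul0rn add0r mulnC mulrnA pm_y mul0rn.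
Qed.

Lemma distinguished_killsM (x : A) (f : Lam) : f <> 0 -> act f x = 0 ->
  exists P, distinguished P /\ inM p (act P x).
Proof.
move=> f_neq0 fx0.
have [a [h [fE ndvd_h]]] := lam_neq0_factor f_neq0.
have [c [v [r TX_modp]]] := lam_TX_modp ndvd_h.
have [q [P [dist_P qhE]]] := weierstrass_preparation TX_modp.
exists P; split => //; exists a.
by rewrite -act_pL_exp -actM -qhE mulrCA -fE actM fx0 act0r.
Qed.

Section UniformBound.
Variable S : A -> Prop.
Hypotheses (S_add : forall x y, S x -> S y -> S (x + y))
  (S_act : forall f x, S x -> S (act f x)).

Lemma TX_exp_modp (f v r : Lam) c : lamT ^+ c = v * f + pL * r ->
  forall m, exists F R, (lamT ^+ c) ^+ m = F * f + pL ^+ m * R.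
Proof.
move=> TX_modp; elim=> [|m [F [R FRE]]]; first by exists 0, 1; rewrite mul0r add0r mulr1.
exists (F * (v * f + pL * r) + pL ^+ m * R * v), (R * r).
by rewrite exprSr FRE TX_modp exprSr; ring.
Qed.

(* Induction on [b]: either some [f] prime to [p] sends [g] into [S], and then
   [T^c] is [f] up to multiples of [p], or every [lam] sending [g] into [S] is
   a multiple of [p] and we recurse on [g *+ p]. *)
Lemma uniform_TX_bound b g : S (g *+ (p ^ b)) -> exists s, forall lam,
  (exists j, S (act (lamT ^+ j * lam) g)) -> S (act (lamT ^+ s * lam) g).
Proof.
elim: b g => [|b IH] g Sg.
  by exists 0%N => lam _; apply: S_act; rewrite expn0 mulr1n in Sg.
have [[f [Sfg ndvd_f]]|nS] := EM (exists f, S (act f g) /\ ~ p_dvd f).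
  have [c [v [r TX_modp]]] := lam_TX_modp ndvd_f.
  have [F [R FRE]] := TX_exp_modp TX_modp b.+1.
  exists (c * b.+1)%N => lam _.
  rewrite exprM FRE mulrDl actDl; apply: S_add.
    by rewrite mulrAC actM; apply: S_act.
  by rewrite -mulrA mulrC actM act_pL_exp; apply: S_act.
have [s IHs] := IH (g *+ p) ltac:(by rewrite -mulrnA -expnS).
exists s => lam [j Sjg].
have [l lE] : p_dvd lam.
  apply: (p_dvd_TXM (j := j)); apply: contrapT => ndvd; apply: nS.
  by exists (lamT ^+ j * lam).
have actE t : act (lamT ^+ t * lam) g = act (lamT ^+ t * l) (g *+ p).
  by rewrite lE mulrCA mulrC [LHS]actM act_natr.
by rewrite actE; apply: IHs; exists j; rewrite -actE.
Qed.

End UniformBound.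

Definition span n (e : 'I_n -> A) x :=
  exists c : 'I_n -> Lam, x = \sum_(i < n) act (c i) (e i).

Lemma spanD n (e : 'I_n -> A) x y : span e x -> span e y -> span e (x + y).
Proof.
move=> [c ->] [d ->]; exists (fun i => c i + d i); rewrite -big_split.
by apply: eq_bigr => i _; rewrite actDl.
Qed.

Lemma span_act n (e : 'I_n -> A) f x : span e x -> span e (act f x).
Proof.
move=> [c ->]; exists (fun i => f * c i); rewrite act_sum.
by apply: eq_bigr => i _; rewrite actM.
Qed.

Lemma span_TX_annihilator n (e : 'I_n -> A) : (forall i, inM p (e i)) ->
  exists s, forall x, span e x ->
    (exists j, act (lamT ^+ j) x = 0) -> act (lamT ^+ s) x = 0.
Proof.
elim: n e => [|n IH] e Me.
  by exists 0%N => x [c ->] _; rewrite big_ord0 act0r.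
pose e' i := e (lift ord0 i).
have [s' IHs'] := IH e' (fun i => Me _).
have [b pb_e0] := Me ord0.
have [|s Hs] := uniform_TX_bound (@spanD _ e') (@span_act _ e') (g := e ord0) (b := b).
  by rewrite pb_e0; exists (fun _ => 0); rewrite big1 // => i _; rewrite act0l.
exists (s' + s)%N => x [c xE] [j Tj_x]; rewrite big_ord_recl in xE.
set x' := \sum_(i < n) _ in xE.
have span_x' : span e' x' by exists (fun i => c (lift ord0 i)).
have span_c0 : span e' (act (lamT ^+ j * c ord0) (e ord0)).
  have -> : act (lamT ^+ j * c ord0) (e ord0) = act (- 1) (act (lamT ^+ j) x').
    move/eqP: Tj_x; rewrite xE actDr addr_eq0 => /eqP Tj_c0.
    by rewrite actM Tj_c0 actNl act1.
  by do 2!apply: span_act.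
have span_Tsx : span e' (act (lamT ^+ s) x).
  by rewrite xE actDr -actM; apply: spanD; [apply: Hs; exists j | apply: span_act].
rewrite exprD actM; apply: IHs' => //.
by exists j; rewrite actC Tj_x act0r.
Qed.

Lemma essord_annihilator_dvd (x : A) l g :
  (1 <= l)%N -> is_essord act x l -> act g x = 0 -> exists h, g = pL ^+ l * h.
Proof.
move=> l_gt0 [J ordJ] gx0.
have [//|[a [h [lt_al gE ndvd_h]]]] := p_adic_factor g l.
have [c [v [r TX_modp]]] := lam_TX_modp ndvd_h.
have [_ ord_min] := ordJ (J + c)%N (leq_addr c J).
have [ordJ_kills _] := ordJ J (leqnn J).
have lE : l = ((l - 1 - a) + a).+1 by lia.
exfalso; apply: (ord_min (l - 1)%N); first by lia.
set b := (l - 1 - a)%N in lE; rewrite (_ : (l - 1 = b + a)%N); last by lia.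
rewrite lE iter_actT -act_pL_exp -actM in ordJ_kills.
rewrite iter_actT -act_pL_exp -actM.
have -> : pL ^+ (b + a) * lamT ^+ (J + c) =
    (pL ^+ b * lamT ^+ J * v) * g + r * (pL ^+ (b + a).+1 * lamT ^+ J).
  by rewrite gE exprS !exprD TX_modp; ring.
by rewrite actDl actM gx0 act0r add0r actM ordJ_kills act0r.
Qed.

Lemma distinguished_kills_generators n (e : 'I_n -> A) : lam_torsion act ->
  exists G, distinguished G /\ forall i, inM p (act G (e i)).
Proof.
move=> torsion.
have /choice[P P_kills] : forall i, exists P, distinguished P /\ inM p (act P (e i)).
  by move=> i; have [f f_neq0 fx0] := torsion (e i); apply: distinguished_killsM fx0.
exists (\prod_(i < n) P i); split.
  elim/big_ind: _ => [|Q R|i _]; first exact: distinguished1.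
    exact: distinguishedM.
  by case: (P_kills i).
move=> i; rewrite (bigD1 i) //= mulrC actM; apply: inM_act.
by case: (P_kills i).
Qed.

Lemma exists_ord_essord_polynomial : finitely_generated act -> lam_torsion act ->
  exists G, [/\ distinguished G,
     (forall a : A, inM p (act G a)) &
     (forall (a : A) (k : nat), is_ord p (act G a) k -> is_essord act (act G a) k)].
Proof.
move=> [n [e gen_e]] torsion.
have [G1 [dist_G1 G1_kills]] := distinguished_kills_generators e torsion.
have [s Ts_kills] := span_TX_annihilator G1_kills.
have span_G1 y : span (fun i => act G1 (e i)) (act G1 y).
  have [c ->] := gen_e y; exists c; rewrite act_sum.
  by apply: eq_bigr => i _; rewrite actC.
exists (lamT ^+ s * G1); split.
- exact: distinguishedM (distinguished_TX s) dist_G1.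
- move=> a; have [c ->] := gen_e a; rewrite act_sum; apply: inM_sum => i.
  by rewrite actC actM; do 2!apply: inM_act.
move=> a k [pk_kills pk_min]; exists 0%N => j _; split.
  by rewrite iter_actT -act_mulrn pk_kills act0r.
move=> k' lt_k'k Tj_pk'; apply: (pk_min k' lt_k'k).
rewrite actM -act_mulrn; apply: Ts_kills; first by rewrite -act_mulrn; apply: span_G1.
exists (j + s)%N; rewrite exprD actM act_mulrn -actM act_mulrn -iter_actT.
exact: Tj_pk'.
Qed.

Lemma delta_part_not_pL (x : A) k (c z : A) :
  ~ inD act x -> is_delta act x k -> x *+ (p ^ k) = c + z -> inM p z ->
  ~ (exists c', inL act c' /\ c = c' *+ p).
Proof.
move=> ndec_x [k_gt0 _ k_min] xE [m pm_z] [c' [L_c' cE]].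
have kE : k = (k - 1).+1 by lia.
have dec : inD act (x *+ (p ^ (k - 1))).
  exists c', (x *+ (p ^ (k - 1)) - c'); split => //; last by rewrite addrC subrK.
  exists m.+1; rewrite expnS mulrnA mulrnBl -mulrnA -expnSr -kE xE cE addrC addKr pm_z.
  by [].
have [k1_eq0|k1_gt0] := posnP (k - 1).
  by apply: ndec_x; rewrite k1_eq0 expn0 mulr1n in dec.
by apply: (k_min (k - 1)%N) => //; rewrite k1_gt0; lia.
Qed.

End LambdaModule.
End Iwasawa.

Theorem mainTheorem3 (p : nat) (p_prime : prime p) (p_odd : odd p)
  (A : zmodType) (act : Lam p -> A -> A)
  (Hmod : is_lam_module act)
  (Hfg : finitely_generated act) (Htor : lam_torsion act) :
  (* (i) *)
  (forall (x : A) (l : nat) (g : Lam p),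
     inM p x -> 1 <= l -> is_essord act x l -> (act g x = 0)%R ->
     exists h : Lam p, g = lam_mul (lam_const (zp_nat p (p ^ l))) h)
  /\
  (* (ii) *)
  (exists G : Lam p, [/\ distinguished G,
     (forall a : A, inM p (act G a)) &
     (forall (a : A) (k : nat), is_ord p (act G a) k ->
        is_essord act (act G a) k)])
  /\
  (* (iii) *)
  (forall (x : A) (k : nat) (c z : A),
     ~ inD act x -> is_delta act x k ->
     (x *+ (p ^ k) = c + z)%R -> inL act c -> inM p z ->
     ~ (exists c' : A, inL act c' /\ (c = c' *+ p)%R)).
Proof.
split; [|split].
- move=> x l g _ l_gt0 essord_x gx0.
  have [h ->] := essord_annihilator_dvd p_prime Hmod l_gt0 essord_x gx0.
  by exists h; rewrite zp_natE lam_const_natr pL_exp.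
- exact: exists_ord_essord_polynomial.
- move=> x k c z ndec_x delta_x xE _ M_z.
  exact: delta_part_not_pL ndec_x delta_x xE M_z.
Qed.
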